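(* There is an absolute constant $C>0$ such that for all $0<\varepsilon\leq 1$ and $0<\delta\leq1$: every finite nonempty set system $\mathcal{F}$ on a finite ground set $V$ with disjointness-ratio at least $\delta$ has an $\varepsilon$-covering of size at most $C\cdot\frac{1}{\varepsilon\delta}\ln\frac{2}{\delta}$.
   Context: Let $\mathcal{F}$ be a finite family of subsets of a finite set $V$. For $x\in V$, $\mathcal{F}_x$ is the set of members of $\mathcal{F}$ containing $x$, and $\mathcal{F}_{xy}=\mathcal{F}_x\cap\mathcal{F}_y$. For $\varepsilon\geq0$, $D_\varepsilon(x)=\{y\in V:|\mathcal{F}_{xy}|\leq\varepsilon|\mathcal{F}|\}$, $D(x)=D_0(x)$, and $D_\varepsilon(X)=\bigcup_{x\in X}D_\varepsilon(x)$. An $\varepsilon$-covering is a set $X\subseteq V$ with $D_\varepsilon(X)=V$. The disjointness-ratio of $\mathcal{F}$ is $\min_{x\in V}|D(x)|/|V|$. *)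

From mathcomp Require Import all_boot.
From Stdlib Require Import Reals.
Set Implicit Arguments. Unset Strict Implicit. Unset Printing Implicit Defensive.

Definition fam_x (V : finType) (F : {set {set V}}) (x : V) : {set {set V}} :=
  [set S in F | x \in S].

Definition fam_xy (V : finType) (F : {set {set V}}) (x y : V) : {set {set V}} :=
  fam_x F x :&: fam_x F y.

Definition Deps (V : finType) (F : {set {set V}}) (eps : R) (x : V) : {set V} :=
  [set y | if Rle_dec (INR #|fam_xy F x y|) (eps * INR #|F|)%R then true else false].

Definition D0 (V : finType) (F : {set {set V}}) (x : V) : {set V} := Deps F 0 x.

Definition Deps_set (V : finType) (F : {set {set V}}) (eps : R) (X : {set V}) : {set V} :=
  \bigcup_(x in X) Deps F eps x.

Definition is_eps_covering (V : finType) (F : {set {set V}}) (eps : R) (X : {set V}) : Prop :=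
  Deps_set F eps X = [set: V].

Definition disj_ratio_ge (V : finType) (F : {set {set V}}) (delta : R) : Prop :=
  forall x : V, (delta <= INR #|D0 F x| / INR #|V|)%R.

From mathcomp Require Import all_boot zify.
From Stdlib Require Import Reals Lra ZArith.

(* Draw X, Y in V^k and T in F^t uniformly, with t about ln(10/delta)/eps, r = 7t + 16
   and k about 4r/delta. For a set tau of indices let G_T(tau) ([avoiding T tau]) be
   the points lying in no T_i with i in tau, and call (X, Y, T) split if for some tau,
   X hits G_T(tau) at most r times while Y hits it at least 2r times. If no X were an
   eps-covering, pick for each X a point y outside D_eps(X) and let tau be the indices
   of the members of T through y. Then G_T(tau) contains D(y), which Y hits 2r times
   with probability at least 1/2 since |D(y)| >= delta |V| (Chernoff), and X hits
   G_T(tau) at most r times with probability at least 1/2 since each X_i lies in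
   G_T(tau) with probability at most (1 - eps)^t (Markov). So split triples have
   density at least 1/4. But for fixed T and tau, randomly exchanging coordinates of X
   and Y shows that split pairs have density at most (8/9)^r, and the union bound over
   tau gives 2^t (8/9)^r < 1/4. *)

(* Reals rebinds [^] in nat_scope to Nat.pow. *)
Local Notation "m ^ n" := (expn m n) : nat_scope.
Set Implicit Arguments. Unset Strict Implicit. Unset Printing Implicit Defensive.

Lemma sum_ffun_prod_leq (I J : finType) (f : I -> J -> nat) c :
  (forall i, \sum_(j : J) f i j <= c) ->
  \sum_(g : {ffun I -> J}) \prod_(i : I) f i (g i) <= c ^ #|I|.
Proof.
move=> le_fc; rewrite -bigA_distr_bigA -prod_nat_const.
by apply: leq_prod => i _; apply: le_fc.
Qed.

Lemma markov_card (I : finType) (A : {pred I}) (f : I -> nat) r :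
  #|[set T in A | r < f T]| * r.+1 <= \sum_(T in A) f T.
Proof.
rewrite -sum1_card big_distrl /= [X in _ <= X](bigID (fun T => r < f T)) /=.
apply: leq_trans (leq_addr _ _); rewrite big_mkcond [X in _ <= X]big_mkcond /=.
apply: leq_sum => T _; rewrite inE; case: (T \in A) => //=.
by case: ltnP; rewrite ?mul1n.
Qed.

Section Hits.
Variables (V : finType) (k : nat).
Implicit Types (X Y : {ffun 'I_k -> V}) (A B : {set V}).

Definition hits X A : nat := \sum_(i < k) (X i \in A).

Lemma hits_subset X A B : A \subset B -> hits X A <= hits X B.
Proof.
move=> sAB; apply: leq_sum => i _.
by case: (boolP (X i \in A)) => // /(subsetP sAB) ->.
Qed.

Lemma hitsC X A : hits X A + hits X (~: A) = k.
Proof.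
rewrite -big_split /= -[X in _ = X]card_ord -sum1_card.
by apply: eq_bigr => i _; rewrite inE; case: (X i \in A).
Qed.

(* Weight each X by prod_i (if X_i \in A then 1 else 2) = 2^(misses of X); the weights
   sum to (|A| + 2 |~A|)^k. *)
Lemma card_few_hits A J :
  #|[set X | hits X A < J]| * 2 ^ k.+1 <= 2 ^ J * (#|A| + 2 * #|~: A|) ^ k.
Proof.
have weight_sum : \sum_(X : {ffun 'I_k -> V}) \prod_(i < k) (if X i \in A then 1 else 2)
                  = (#|A| + 2 * #|~: A|) ^ k.
  rewrite -(bigA_distr_bigA (fun (i : 'I_k) (v : V) => if v \in A then 1 else 2)) /=.
  rewrite prod_nat_const card_ord; congr (_ ^ _).
  rewrite (bigID (mem A)) /= -sum1_card mulnC -sum_nat_const.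
  congr (_ + _); apply: eq_big => v; rewrite ?inE //; first by move=> ->.
  by move=> /negbTE ->.
rewrite -weight_sum big_distrr /= -sum_nat_const.
rewrite [X in _ <= X](bigID (mem [set X | hits X A < J])) /=.
apply: leq_trans (leq_addr _ _); apply: leq_sum => X; rewrite inE => few.
have -> : \prod_(i < k) (if X i \in A then 1 else 2) = 2 ^ hits X (~: A).
  by rewrite expn_sum; apply: eq_bigr => i _; rewrite inE; case: (X i \in A).
by rewrite -expnD leq_exp2l //; have := hitsC X A; lia.
Qed.

Lemma many_hits A J :
  2 ^ J * (#|A| + 2 * #|~: A|) ^ k <= 2 ^ k * #|V| ^ k ->
  #|V| ^ k <= 2 * #|[set Y | J <= hits Y A]|.
Proof.
move=> weight_small.
have few := leq_trans (card_few_hits A J) weight_small.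
have split_card : #|[set Y | J <= hits Y A]| + #|[set X | hits X A < J]| = #|V| ^ k.
  have := cardsC [set Y : {ffun 'I_k -> V} | J <= hits Y A].
  rewrite card_ffun card_ord => <-; congr (_ + _).
  by apply: eq_card => Y; rewrite !inE ltnNge.
move: few split_card; rewrite expnS.
have : 0 < 2 ^ k by rewrite expn_gt0.
nia.
Qed.

End Hits.

Section Swaps.
Variables (V : finType) (k : nat).
Notation sample := {ffun 'I_k -> V}.

Definition swap_at (s : {ffun 'I_k -> bool}) (p : sample * sample) : sample * sample :=
  ([ffun i => if s i then p.2 i else p.1 i], [ffun i => if s i then p.1 i else p.2 i]).

Lemma swap_atK s : involutive (swap_at s).
Proof.
case=> X Y; congr (_, _); apply/ffunP => i; rewrite !ffunE; by case: (s i).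
Qed.

Lemma card_mul_swaps (P : pred (sample * sample)) :
  #|[set p | P p]| * 2 ^ k = \sum_(p : sample * sample) #|[set s | P (swap_at s p)]|.
Proof.
have -> : \sum_(p : sample * sample) #|[set s | P (swap_at s p)]|
    = \sum_(s : {ffun 'I_k -> bool}) \sum_(p : sample * sample) P (swap_at s p).
  rewrite exchange_big /=; apply: eq_bigr => p _; rewrite -sum1_card big_mkcond /=.
  by apply: eq_bigr => s _; rewrite inE; case: (P _).
have -> : \sum_(s : {ffun 'I_k -> bool}) \sum_(p : sample * sample) P (swap_at s p)
    = \sum_(s : {ffun 'I_k -> bool}) #|[set p | P p]|.
  apply: eq_bigr => s _; rewrite (reindex_inj (can_inj (swap_atK s))) /=.
  rewrite -sum1_card [RHS]big_mkcond /=.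
  by apply: eq_bigr => p _; rewrite swap_atK inE; case: (P _).
by rewrite sum_nat_const cardT -cardE card_ffun card_bool card_ord mulnC.
Qed.

Lemma split_weight_ineq c c' r :
  c <= r -> 2 * r <= c' -> 9 ^ r * 2 ^ c * 2 ^ c' <= 3 ^ c' * 8 ^ r.
Proof.
move=> le_cr le_rc'; have -> : c' = 2 * r + (c' - 2 * r) by lia.
set d := c' - 2 * r.
have le2c : 2 ^ c <= 2 ^ r by rewrite leq_exp2l.
have le23 : 2 ^ d <= 3 ^ d by elim: d => // d IH; rewrite !expnS leq_mul.
have -> : 8 ^ r = 2 ^ r * 4 ^ r by rewrite -expnMn.
rewrite [2 ^ (_ + _)]expnD [3 ^ (_ + _)]expnD !expnM.
have -> : 9 ^ r * 2 ^ c * (4 ^ r * 2 ^ d) = (9 ^ r * 4 ^ r) * (2 ^ c * 2 ^ d) by lia.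
have -> : 9 ^ r * 3 ^ d * (2 ^ r * 4 ^ r) = (9 ^ r * 4 ^ r) * (2 ^ r * 3 ^ d) by lia.
by rewrite leq_mul2l leq_mul ?orbT.
Qed.

(* Weight the swap s by w s := prod_i 3^[Y'_i in G] 2^[X'_i notin G] 2^[Y'_i notin G],
   where (X', Y') := swap_at s (X, Y): then w s * 2^(hits X' G) * 2^(hits Y' G)
   = 3^(hits Y' G) * 4^k, while the weights of all swaps sum to at most 8^k. *)
Lemma card_split_swaps (X Y : sample) (G : {set V}) r :
  #|[set s | (hits (swap_at s (X, Y)).1 G <= r) && (2 * r <= hits (swap_at s (X, Y)).2 G)]|
    * 9 ^ r <= 2 ^ k * 8 ^ r.
Proof.
pose u i (b : bool) := if b then Y i else X i.
pose u' i (b : bool) := if b then X i else Y i.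
pose wi i b := 3 ^ (u' i b \in G) * 2 ^ (u i b \notin G) * 2 ^ (u' i b \notin G).
pose w (s : {ffun 'I_k -> bool}) := \prod_(i < k) wi i (s i).
have sum_w : \sum_s w s <= 8 ^ k.
  rewrite -[X in 8 ^ X]card_ord; apply: sum_ffun_prod_leq => i.
  by rewrite big_bool /wi /u /u'; case: (X i \in G); case: (Y i \in G).
have w_hits s : w s * 2 ^ hits (swap_at s (X, Y)).1 G * 2 ^ hits (swap_at s (X, Y)).2 G
                = 3 ^ hits (swap_at s (X, Y)).2 G * 4 ^ k.
  rewrite /w /hits !expn_sum -!big_split /=.
  rewrite -[X in _ * 4 ^ X]card_ord -prod_nat_const -big_split /=.
  apply: eq_bigr => i _; rewrite /wi !ffunE -/(u i (s i)) -/(u' i (s i)).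
  by case: (u i (s i) \in G); case: (u' i (s i) \in G).
set E := [set s | _].
have w_split s : s \in E -> 9 ^ r * 4 ^ k <= w s * 8 ^ r.
  rewrite inE => /andP [few many]; have := split_weight_ineq few many.
  set c := hits _ G; set c' := hits _ G => ineq.
  rewrite -(@leq_pmul2r (2 ^ c * 2 ^ c')) ?muln_gt0 ?expn_gt0 //.
  have -> : w s * 8 ^ r * (2 ^ c * 2 ^ c') = w s * 2 ^ c * 2 ^ c' * 8 ^ r by lia.
  rewrite w_hits.
  have -> : 9 ^ r * 4 ^ k * (2 ^ c * 2 ^ c') = 9 ^ r * 2 ^ c * 2 ^ c' * 4 ^ k by lia.
  have -> : 3 ^ c' * 4 ^ k * 8 ^ r = 3 ^ c' * 8 ^ r * 4 ^ k by lia.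
  by rewrite leq_mul2r ineq orbT.
have card_E : #|E| * (9 ^ r * 4 ^ k) <= 8 ^ k * 8 ^ r.
  rewrite -sum1_card big_distrl /=.
  apply: (@leq_trans (\sum_(s in E) w s * 8 ^ r)).
    by apply: leq_sum => s /w_split; rewrite mul1n.
  rewrite -big_distrl /= leq_mul2r (leq_trans _ sum_w) ?orbT //.
  by rewrite [X in _ <= X](bigID (mem E)) /= leq_addr.
move: card_E; rewrite -[8]/(2 * 4) expnMn.
have : 0 < 4 ^ k by rewrite expn_gt0.
nia.
Qed.

Lemma card_split_pairs (G : {set V}) r :
  #|[set p : sample * sample | (hits p.1 G <= r) && (2 * r <= hits p.2 G)]| * 9 ^ r
  <= (#|V| ^ k) ^ 2 * 8 ^ r.
Proof.
rewrite -(@leq_pmul2r (2 ^ k)) ?expn_gt0 //.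
rewrite mulnAC card_mul_swaps big_distrl /=.
apply: (@leq_trans (\sum_(p : sample * sample) 2 ^ k * 8 ^ r)).
  by apply: leq_sum => -[X Y] _; apply: card_split_swaps.
rewrite sum_nat_const cardT -cardE card_prod card_ffun card_ord.
by rewrite mulnn [2 ^ k * _]mulnC mulnA.
Qed.

End Swaps.

Lemma in_Deps (V : finType) (F : {set {set V}}) eps x y :
  (y \in Deps F eps x) <-> (INR #|fam_xy F x y| <= eps * INR #|F|)%R.
Proof. by rewrite /Deps inE; case: Rle_dec. Qed.

Section AvoidingSets.
Variables (V : finType) (F : {set {set V}}) (t : nat).
Implicit Types (T : {ffun 'I_t -> {set V}}) (tau : {set 'I_t}).

Definition avoiding T tau : {set V} := [set x | [forall i in tau, x \notin T i]].

Definition trace T (y : V) : {set 'I_t} := [set i | y \in T i].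

Lemma card_avoiding_trace x y :
  #|[pred T in ffun_on F | x \in avoiding T (trace T y)]| = #|F :\: fam_xy F x y| ^ t.
Proof.
rewrite -[X in _ ^ X]card_ord -card_ffun_on; apply: eq_card => T.
rewrite !inE; apply/andP/ffun_onP.
  move=> [/ffun_onP onF /forall_inP avoid] i; move: (onF i) (avoid i).
  by rewrite /fam_xy /fam_x !inE => ->; case: (y \in T i); case: (x \in T i) => // ->.
move=> onF; split; first by apply/ffun_onP => i; move: (onF i); rewrite inE => /andP [].
apply/forall_inP => i; move: (onF i); rewrite /fam_xy /fam_x !inE.
by case: (T i \in F); case: (y \in T i); case: (x \in T i).
Qed.

Lemma sum_hits_avoiding_trace k (X : {ffun 'I_k -> V}) y :
  \sum_(T in ffun_on F) hits X (avoiding T (trace T y))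
  = \sum_(i < k) #|F :\: fam_xy F (X i) y| ^ t.
Proof.
rewrite /hits exchange_big /=; apply: eq_bigr => i _.
rewrite -card_avoiding_trace -sum1_card [RHS]big_mkcond [LHS]big_mkcond /=.
by apply: eq_bigr => T _; rewrite [in RHS]inE; case: (T \in ffun_on F).
Qed.

Lemma D0_subset_avoiding_trace T y :
  T \in ffun_on F -> D0 F y \subset avoiding T (trace T y).
Proof.
move=> /ffun_onP onF; apply/subsetP => x /in_Deps; rewrite Rmult_0_l => no_xy.
have {}no_xy : #|fam_xy F y x| = 0 by apply/INR_eq/Rle_antisym => //; apply: pos_INR.
rewrite inE; apply/forall_inP => i; rewrite inE => yTi; apply/negP => xTi.
by have := card0_eq no_xy (T i); rewrite /fam_xy /fam_x !inE onF yTi xTi.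
Qed.

End AvoidingSets.

Lemma card_exists_leq (I J : finType) (P : I -> J -> bool) :
  #|[set j | [exists i, P i j]]| <= \sum_i #|[set j | P i j]|.
Proof.
under eq_bigr => i _ do rewrite -sum1_card big_mkcond /=.
rewrite exchange_big /= -sum1_card big_mkcond /=; apply: leq_sum => j _.
rewrite inE; case: existsP => // -[i Pij].
by rewrite (bigD1 i) //= inE Pij.
Qed.

Section DoubleSampling.
Variables (V : finType) (F : {set {set V}}) (eps : R) (k t r : nat).
Notation sample := {ffun 'I_k -> V}.
Notation fsample := {ffun 'I_t -> {set V}}.

Definition split_sample (X Y : sample) (T : fsample) : bool :=
  [exists tau, (hits X (avoiding T tau) <= r) && (2 * r <= hits Y (avoiding T tau))].

(* The first condition makes a random Y hit D(y) at least 2r times with probability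
   at least 1/2 (see [many_hits]); the second bounds the expected number of hits of X
   in [avoiding T (trace T y)] by (r + 1)/2 when no X_i covers y. *)
Hypothesis weight_D0 :
  forall y, 2 ^ (2 * r) * (#|D0 F y| + 2 * #|~: D0 F y|) ^ k <= 2 ^ k * #|V| ^ k.
Hypothesis far_rare :
  forall x y, y \notin Deps F eps x -> 2 * k * #|F :\: fam_xy F x y| ^ t <= r.+1 * #|F| ^ t.

Lemma many_few_hits_avoiding_trace (X : sample) y :
  (forall i, y \notin Deps F eps (X i)) ->
  #|F| ^ t <= 2 * #|[set T : fsample in ffun_on F | hits X (avoiding T (trace T y)) <= r]|.
Proof.
move=> uncovered.
set good := [set T : fsample in ffun_on F | hits X (avoiding T (trace T y)) <= r].
set bad := [set T : fsample in ffun_on F | r < hits X (avoiding T (trace T y))].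
have sum_far : 2 * \sum_(i < k) #|F :\: fam_xy F (X i) y| ^ t <= r.+1 * #|F| ^ t.
  have [k0 | k_gt0] := posnP k; first by rewrite big1 // => i; move: (ltn_ord i); rewrite {2}k0.
  rewrite -(leq_pmul2l k_gt0) mulnA [k * 2]mulnC big_distrr /=.
  rewrite -[X in _ <= X * _]card_ord -sum_nat_const leq_sum // => i _.
  exact/far_rare/uncovered.
have few_bad : 2 * #|bad| <= #|F| ^ t.
  rewrite -(@leq_pmul2l r.+1) // mulnCA (leq_trans _ sum_far) // leq_mul2l /= mulnC.
  by rewrite -sum_hits_avoiding_trace; apply: markov_card.
have split_card : #|good| + #|bad| = #|F| ^ t.
  rewrite -[X in _ ^ X]card_ord -card_ffun_on.
  rewrite -(cardID [pred T | hits X (avoiding T (trace T y)) <= r] (ffun_on F)).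
  by congr (_ + _); apply: eq_card => T; rewrite !inE // ltnNge andbC.
lia.
Qed.

Lemma many_split_samples (X : sample) y :
  (forall i, y \notin Deps F eps (X i)) ->
  #|V| ^ k * #|F| ^ t <= 4 * \sum_(Y : sample) \sum_(T in ffun_on F) split_sample X Y T.
Proof.
move=> uncovered.
set gY := [set Y : sample | 2 * r <= hits Y (D0 F y)].
set gT := [set T : fsample in ffun_on F | hits X (avoiding T (trace T y)) <= r].
have card_gY : #|V| ^ k <= 2 * #|gY| := many_hits (weight_D0 y).
have card_gT : #|F| ^ t <= 2 * #|gT| := many_few_hits_avoiding_trace uncovered.
apply: (@leq_trans (4 * (#|gY| * #|gT|))); first by nia.
rewrite leq_mul2l /= -sum1_card big_distrl /= [X in _ <= X](bigID (mem gY)) /=.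
apply: leq_trans (leq_addr _ _); apply: leq_sum => Y gY_Y.
rewrite mul1n -sum1_card big_mkcond [X in _ <= X]big_mkcond /=; apply: leq_sum => T _.
rewrite inE; case/boolP: (T \in ffun_on F) => //= onF; case: ifP => // few.
rewrite lt0b; apply/existsP; exists (trace T y); rewrite few /=.
by apply: leq_trans _ (hits_subset Y (D0_subset_avoiding_trace y onF)); rewrite inE in gY_Y.
Qed.

Lemma few_split_samples T :
  #|[set p : sample * sample | split_sample p.1 p.2 T]| * 9 ^ r
  <= 2 ^ t * ((#|V| ^ k) ^ 2 * 8 ^ r).
Proof.
apply: leq_trans (leq_mul (card_exists_leq _) (leqnn _)) _.
rewrite big_distrl /= (@leq_trans (\sum_(tau : {set 'I_t}) (#|V| ^ k) ^ 2 * 8 ^ r)) //.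
  by apply: leq_sum => tau _; apply: card_split_pairs.
have card_sets : #|{set 'I_t}| = 2 ^ t.
  by rewrite -cardsT -powersetT card_powerset cardsT card_ord.
by rewrite sum_nat_const card_sets.
Qed.

Hypotheses (F_gt0 : 0 < #|F|) (V_gt0 : 0 < #|V|) (small_r : 4 * 2 ^ t * 8 ^ r < 9 ^ r).

Theorem exists_covering_sample :
  exists X : sample, forall y, exists i, y \in Deps F eps (X i).
Proof.
have [/existsP [X /forallP cover] | no_cover] :=
  boolP [exists X : sample, [forall y, [exists i, y \in Deps F eps (X i)]]].
  by exists X => y; apply/existsP.
exfalso; set S := \sum_(X : sample) \sum_(Y : sample) \sum_(T in ffun_on F) split_sample X Y T.
have lower : #|V| ^ k * (#|V| ^ k * #|F| ^ t) <= 4 * S.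
  have -> : #|V| ^ k * (#|V| ^ k * #|F| ^ t) = \sum_(X : sample) #|V| ^ k * #|F| ^ t.
    by rewrite sum_nat_const card_ffun card_ord.
  rewrite big_distrr /=; apply: leq_sum => X _.
  have /forallPn [y /existsPn uncovered] := existsPn no_cover X.
  exact: many_split_samples.
have upper : S * 9 ^ r <= #|F| ^ t * (2 ^ t * ((#|V| ^ k) ^ 2 * 8 ^ r)).
  have -> : S = \sum_(T in ffun_on F) #|[set p : sample * sample | split_sample p.1 p.2 T]|.
    rewrite /S pair_big /= exchange_big /=; apply: eq_bigr => T _.
    by rewrite -sum1_card [RHS]big_mkcond /=; apply: eq_bigr => p _; rewrite inE.
  have -> : #|F| ^ t * (2 ^ t * ((#|V| ^ k) ^ 2 * 8 ^ r))
            = \sum_(T : fsample | T \in ffun_on F) 2 ^ t * ((#|V| ^ k) ^ 2 * 8 ^ r).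
    by rewrite sum_nat_const card_ffun_on card_ord.
  rewrite big_distrl /=; apply: leq_sum => T _; apply: few_split_samples.
have NM_gt0 : 0 < #|V| ^ k * (#|V| ^ k * #|F| ^ t) by rewrite !muln_gt0 !expn_gt0 V_gt0 F_gt0.
move: small_r; rewrite ltnNge -(leq_pmul2l NM_gt0) => /negP; apply.
apply: leq_trans (leq_mul lower (leqnn _)) _.
rewrite -mulnA (leq_trans (leq_mul (leqnn 4) upper)) //.
by rewrite -mulnn; nia.
Qed.

End DoubleSampling.

Lemma INR_expn m n : INR (m ^ n) = (INR m ^ n)%R.
Proof. by elim: n => [|n IH]; rewrite ?expn0 // expnS mulnE mult_INR IH. Qed.

Lemma INR_muln m n : INR (m * n) = (INR m * INR n)%R.
Proof. by rewrite mulnE mult_INR. Qed.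

Lemma INR_addn m n : INR (m + n) = (INR m + INR n)%R.
Proof. by rewrite addnE plus_INR. Qed.

Lemma exp_le_compat x y : (x <= y)%R -> (exp x <= exp y)%R.
Proof. by case=> [/exp_increasing /Rlt_le | ->]; last exact: Rle_refl. Qed.

Lemma ln_le_compat x y : (0 < x)%R -> (x <= y)%R -> (ln x <= ln y)%R.
Proof. by move=> x_gt0 [/(ln_increasing _ _ x_gt0) /Rlt_le | ->]; last exact: Rle_refl. Qed.

Lemma pow_exp x n : (exp x ^ n = exp (INR n * x))%R.
Proof. by rewrite -[x in RHS]ln_exp -ln_pow ?exp_ln //; [apply: pow_lt | ]; apply: exp_pos. Qed.

Lemma exp_1_ge_2 : (2 <= exp 1)%R.
Proof. by have := exp_ineq1_le 1; lra. Qed.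

Lemma ln_2_ge_half : (1 / 2 <= ln 2)%R.
Proof.
have exp_half_sq : (exp (1 / 2) * exp (1 / 2) = exp 1)%R by rewrite -exp_plus; f_equal; lra.
have := exp_le_3; have := exp_pos (1 / 2) => ? ?.
rewrite -[X in (X <= _)%R]ln_exp; apply: ln_le_compat => //; nra.
Qed.

Lemma ln_5_le_3 : (ln 5 <= 3)%R.
Proof.
have exp_3 : (exp 3 = exp 1 * exp 1 * exp 1)%R by rewrite -!exp_plus; f_equal; lra.
have := exp_1_ge_2 => ?.
rewrite -[X in (_ <= X)%R]ln_exp; apply: ln_le_compat; first lra.
rewrite exp_3; nra.
Qed.

Lemma nat_ceil_spec x : (0 <= x)%R -> exists n : nat, (x <= INR n <= x + 1)%R.
Proof.
move=> x_ge0; have [up_gt up_le] := archimed x.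
have up_ge0 : (0 <= up x)%Z by apply: le_IZR; lra.
by exists (Z.to_nat (up x)); rewrite INR_IZR_INZ Z2Nat.id //; lra.
Qed.

Lemma four_exp2_exp8_lt_exp9 t : 4 * 2 ^ t * 8 ^ (7 * t + 16) < 9 ^ (7 * t + 16).
Proof.
apply/ltP/INR_lt; rewrite !INR_muln !INR_expn.
have split_exp x : (x ^ (7 * t + 16) = (x ^ 7) ^ t * x ^ 16)%R.
  by rewrite -pow_mult -pow_add; f_equal; lia.
rewrite !split_exp.
have base_le : (INR 2 * INR 8 ^ 7 <= INR 9 ^ 7)%R by simpl; lra.
have := pow_incr _ _ t (conj (Rmult_le_pos _ _ (pos_INR 2) (pow_le _ 7 (pos_INR 8))) base_le).
rewrite Rpow_mult_distr.
have : (0 < (INR 9 ^ 7) ^ t)%R by apply/pow_lt/pow_lt; simpl; lra.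
have : (INR 4 * INR 8 ^ 16 < INR 9 ^ 16)%R by simpl; lra.
have : (0 < INR 8 ^ 16)%R by simpl; lra.
have : (INR 4 = 4)%R by simpl; lra.
move: (INR 2 ^ t)%R ((INR 8 ^ 7) ^ t)%R ((INR 9 ^ 7) ^ t)%R => p q b -> c_gt0 cd b_gt0 pq_le.
have : (4 * (p * q) * INR 8 ^ 16 <= 4 * b * INR 8 ^ 16)%R.
  by apply: Rmult_le_compat_r; lra.
nra.
Qed.

Lemma chernoff_condition (n a k r : nat) (delta : R) :
  0 < n -> a <= n -> (0 < delta)%R -> (delta * INR n <= INR a)%R ->
  (4 * INR r <= delta * INR k)%R ->
  2 ^ (2 * r) * (a + 2 * (n - a)) ^ k <= 2 ^ k * n ^ k.
Proof.
move=> n_gt0 le_an delta_gt0 dense large_k.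
apply/leP/INR_le.
rewrite !INR_muln !INR_expn INR_addn INR_muln (minus_INR _ _ (elimT leP le_an)).
have -> : INR 2 = 2%R by [].
have a_le : (INR a <= INR n)%R by apply/le_INR/leP.
have base : (0 <= INR a + 2 * (INR n - INR a) <= 2 * INR n * exp (- (delta / 2)))%R.
  have n_ge0 : (0 <= 2 * INR n)%R by have := pos_INR n; lra.
  have := Rmult_le_compat_l _ _ _ n_ge0 (exp_ineq1_le (- (delta / 2))).
  by split; nra.
have := pow_incr _ _ k base; rewrite !Rpow_mult_distr pow_exp => pow_le_exp.
have exp_le : (exp (INR k * - (delta / 2)) <= exp (-2) ^ r)%R.
  by rewrite pow_exp; apply: exp_le_compat; nra.
have four_exp : ((2 ^ 2) ^ r * exp (-2) ^ r <= 1)%R.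
  have exp_2_ge_4 : (4 <= exp 2)%R.
    have -> : exp 2 = (exp 1 * exp 1)%R by rewrite -exp_plus; f_equal; lra.
    by have := exp_1_ge_2; nra.
  have exp_2_gt0 := exp_pos 2.
  rewrite -Rpow_mult_distr -(pow1 r); apply: pow_incr; rewrite exp_Ropp -/(IZR 2).
  have -> : (2 ^ 2 = 4)%R by ring.
  split; first by apply: Rmult_le_pos; [lra | apply/Rlt_le/Rinv_0_lt_compat].
  apply: (Rmult_le_reg_r (exp 2)) => //.
  by rewrite Rmult_assoc Rinv_l; lra.
have M_ge0 : (0 <= 2 ^ k * INR n ^ k)%R.
  by apply: Rmult_le_pos; apply: pow_le; [lra | apply: pos_INR].
rewrite pow_mult.
apply: (Rle_trans _ ((2 ^ 2) ^ r * (2 ^ k * INR n ^ k * exp (-2) ^ r))); last nra.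
apply: Rmult_le_compat_l; first by apply/pow_le/pow_le; lra.
exact/(Rle_trans _ _ _ pow_le_exp)/Rmult_le_compat_l.
Qed.

Lemma markov_condition (m f k t r : nat) (eps delta : R) :
  (0 < eps)%R -> (0 < delta <= 1)%R -> f <= m -> (eps * INR m < INR f)%R ->
  (ln (10 / delta) <= eps * INR t)%R -> (INR k <= 4 * INR r / delta + 1)%R -> 0 < r ->
  2 * k * (m - f) ^ t <= r.+1 * m ^ t.
Proof.
move=> eps_gt0 delta_01 le_fm far ln_le_t k_le r_gt0.
apply/leP/INR_le; rewrite !INR_muln !INR_expn (minus_INR _ _ (elimT leP le_fm)).
have r_ge1 : (1 <= INR r)%R by apply: (le_INR 1); apply/leP.
have m_ge0 := pos_INR m.
have f_le : (INR f <= INR m)%R by apply/le_INR/leP.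
have base : (0 <= INR m - INR f <= INR m * exp (- eps))%R.
  have := Rmult_le_compat_l _ _ _ m_ge0 (exp_ineq1_le (- eps)).
  by split; nra.
have := pow_incr _ _ t base; rewrite Rpow_mult_distr pow_exp => pow_le_exp.
have exp_le : (exp (INR t * - eps) <= delta / 10)%R.
  have -> : (delta / 10 = exp (- ln (10 / delta)))%R.
    by rewrite exp_Ropp exp_ln; [field; lra | apply: Rdiv_lt_0_compat; lra].
  by apply: exp_le_compat; nra.
have two_k : (INR 2 * INR k <= 10 * INR r / delta)%R.
  have : (2 <= 2 * INR r / delta)%R.
    by apply: (Rmult_le_reg_r delta); [lra | rewrite /Rdiv Rmult_assoc Rinv_l; nra].
  by rewrite /Rdiv in k_le * => ?; rewrite (_ : INR 2 = 2%R) //; lra.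
have mt_ge0 : (0 <= INR m ^ t)%R by apply: pow_le.
apply: (Rle_trans _ (10 * INR r / delta * (INR m ^ t * (delta / 10)))).
  apply: Rmult_le_compat; [apply: Rmult_le_pos; apply: pos_INR | by apply: pow_le; lra | done |].
  exact: Rle_trans pow_le_exp (Rmult_le_compat_l _ _ _ mt_ge0 exp_le).
have -> : (10 * INR r / delta * (INR m ^ t * (delta / 10)) = INR r * INR m ^ t)%R.
  by field; lra.
by rewrite S_INR; nra.
Qed.

Lemma sample_parameters (eps delta : R) :
  (0 < eps <= 1)%R -> (0 < delta <= 1)%R ->
  exists k t : nat,
    [/\ (ln (10 / delta) <= eps * INR t)%R,
        (4 * INR (7 * t + 16) <= delta * INR k)%R,
        (INR k <= 4 * INR (7 * t + 16) / delta + 1)%R &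
        (INR k <= 400 * (1 / (eps * delta)) * ln (2 / delta))%R].
Proof.
move=> eps_01 delta_01.
set L := ln (2 / delta); set v := (/ eps)%R; set w := (/ delta)%R.
have eps_v : (eps * v = 1)%R by rewrite /v Rinv_r //; lra.
have delta_w : (delta * w = 1)%R by rewrite /w Rinv_r //; lra.
have v_ge1 : (1 <= v)%R by nra.
have w_ge1 : (1 <= w)%R by nra.
have L_ge : (1 / 2 <= L)%R.
  apply: Rle_trans ln_2_ge_half (ln_le_compat _ _) => //; first lra.
  by rewrite /Rdiv -/w; nra.
have ln_10 : (ln (10 / delta) <= 7 * L)%R.
  have -> : (10 / delta = 5 * (2 / delta))%R by field; lra.
  by rewrite ln_mult -/L; [have := ln_5_le_3; lra | lra | rewrite /Rdiv -/w; nra].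
have ln_10_ge0 : (0 <= ln (10 / delta) * v)%R.
  apply: Rmult_le_pos; last lra.
  by rewrite -ln_1; apply: ln_le_compat; [lra | rewrite /Rdiv -/w; nra].
have [t [t_ge t_le]] := nat_ceil_spec ln_10_ge0.
have r_ge0 : (0 <= 4 * INR (7 * t + 16) * w)%R by have := pos_INR (7 * t + 16); nra.
have [k [k_ge k_le]] := nat_ceil_spec r_ge0.
have r_eq : INR (7 * t + 16) = (7 * INR t + 16)%R.
  by rewrite INR_addn INR_muln (INR_IZR_INZ 7) (INR_IZR_INZ 16).
exists k, t; split; [nra | nra | by rewrite /Rdiv -/w |].
rewrite /Rdiv Rmult_1_l Rinv_mult -/v -/w.
have wt_le : (w * INR t <= w * (ln (10 / delta) * v + 1))%R by apply: Rmult_le_compat_l; lra.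
have vw_L : (w * (ln (10 / delta) * v) <= 7 * L * (v * w))%R.
  by rewrite (Rmult_comm w) Rmult_assoc [(v * w)%R]Rmult_comm; apply: Rmult_le_compat_r; nra.
have vw_ge1 : (1 <= v * w)%R by nra.
have w_le : (w <= v * w)%R by nra.
have : (93 * (v * w) <= 186 * L * (v * w))%R by nra.
rewrite r_eq in k_le; nra.
Qed.

Lemma disj_ratio_weight_D0 (V : finType) (F : {set {set V}}) (delta : R) (k r : nat) :
  (0 < delta)%R -> 0 < #|V| -> disj_ratio_ge F delta ->
  (4 * INR r <= delta * INR k)%R ->
  forall y, 2 ^ (2 * r) * (#|D0 F y| + 2 * #|~: D0 F y|) ^ k <= 2 ^ k * #|V| ^ k.
Proof.
move=> delta_gt0 V_gt0 ratio large_k y.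
have -> : #|~: D0 F y| = #|V| - #|D0 F y| by rewrite -(cardsC (D0 F y)) addKn.
apply: chernoff_condition large_k => //; first exact: max_card.
have V_pos : (0 < INR #|V|)%R by apply/lt_0_INR/ltP.
have := Rmult_le_compat_r _ _ _ (Rlt_le _ _ V_pos) (ratio y).
by rewrite /Rdiv Rmult_assoc Rinv_l ?Rmult_1_r //; lra.
Qed.

Lemma far_avoid_bound (V : finType) (F : {set {set V}}) (eps delta : R) (k t r : nat) :
  (0 < eps)%R -> (0 < delta <= 1)%R -> (ln (10 / delta) <= eps * INR t)%R ->
  (INR k <= 4 * INR r / delta + 1)%R -> 0 < r ->
  forall x y, y \notin Deps F eps x ->
  2 * k * #|F :\: fam_xy F x y| ^ t <= r.+1 * #|F| ^ t.
Proof.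
move=> eps_gt0 delta_01 large_t small_k r_gt0 x y /negP far_xy.
have sub_F : fam_xy F x y \subset F by apply/subsetP => S; rewrite !inE => /andP [/andP []].
rewrite cardsD (setIidPr sub_F).
apply: markov_condition large_t small_k r_gt0 => //; first exact: subset_leq_card.
by apply: Rnot_le_lt => close; apply/far_xy/in_Deps.
Qed.

Theorem lemma1p2 :
  exists C : R, (0 < C)%R /\
    forall (eps delta : R), (0 < eps <= 1)%R -> (0 < delta <= 1)%R ->
    forall (V : finType) (F : {set {set V}}),
      F != set0 ->
      disj_ratio_ge F delta ->
      exists X : {set V},
        is_eps_covering F eps X /\
        (INR #|X| <= C * (1 / (eps * delta)) * ln (2 / delta))%R.
Proof.
exists 400%R; split; first lra.
move=> eps delta eps_01 delta_01 V F F_neq0 ratio.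
have [k [t [large_t large_k small_k size_k]]] := sample_parameters eps_01 delta_01.
have [V0 | V_gt0] := posnP #|V|.
  exists set0; split; last by rewrite cards0; apply: Rle_trans (pos_INR k) size_k.
  by apply/setP => v; have := card0_eq V0 v.
have weight := disj_ratio_weight_D0 (proj1 delta_01) V_gt0 ratio large_k.
have far := far_avoid_bound (F := F) (proj1 eps_01) delta_01 large_t small_k (ltn_addl _ (isT : 0 < 16)).
have F_gt0 : 0 < #|F| by rewrite card_gt0.
have [X covers] := exists_covering_sample weight far F_gt0 V_gt0 (four_exp2_exp8_lt_exp9 t).
exists [set X i | i : 'I_k]; split.
  apply/setP => y; rewrite inE; have [i y_i] := covers y.
  by apply/bigcupP; exists (X i); rewrite ?imset_f.
apply: Rle_trans size_k; apply/le_INR/leP.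
by apply: leq_trans (leq_imset_card _ _) _; rewrite card_ord.
Qed.
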